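(* Let $\mathbb F$ be a field. The $\mathsf p$-family $(\mathrm{HC}^2)=(\mathrm{HC}_n^2)_{n\in\mathbb N}$ does not lie in $\mathrm{VNPC}(\trianglelefteq_{\mathsf p})$, i.e. $(\mathrm{HC})\not\trianglelefteq_{\mathsf p}(\mathrm{HC}^2)$.
   Context: $\varepsilon$ is a new indeterminate. A $\mathsf p$-family $(f)=(f_n)_{n\in\mathbb N}$ is a sequence of multivariate polynomials whose number of variables and degree are polynomially bounded in $n$. For polynomials over a field $K$, $f\le g$ (projection) means $f=g(\alpha_1,\dots,\alpha_M)$ where each $\alpha_i$ is a variable of $f$ or an element of $K$. For $f,g$ over $\mathbb F$, $f\trianglelefteq g$ if $f+\varepsilon h\le g$ (projection over $\mathbb F(\varepsilon)$) for some polynomial $h$ over $\mathbb F[\varepsilon]$; $(f)\trianglelefteq_{\mathsf p}(g)$ if there is a polynomially bounded $t:\mathbb N\to\mathbb N$ with $f_n\trianglelefteq g_{t(n)}$ for all $n$. $\mathrm{HC}_n=\sum_{\pi}\prod_{i=1}^n x_{i,\pi(i)}$, summing over permutations $\pi$ of $\{1,\dots,n\}$ that are $n$-cycles. $\mathrm{VNP}$ is the set of $\mathsf p$-families $(f)$ with $(f)\le_{\mathsf p}(\mathrm{HC})$ (where $(f)\le_{\mathsf p}(g)$ means $f_n\le g_{t(n)}$ for a polynomially bounded $t$), and $\mathrm{VNPC}(\trianglelefteq_{\mathsf p})=\{(f)\in\mathrm{VNP}:(\mathrm{HC})\trianglelefteq_{\mathsf p}(f)\}$. *)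

From HB Require Import structures.
From mathcomp Require Import all_boot all_order all_algebra all_fingroup.
From mathcomp Require Import mpoly.
Set Implicit Arguments. Unset Strict Implicit. Unset Printing Implicit Defensive.
Import GRing.Theory.
Local Open Scope ring_scope.

Definition var_ij (R : ringType) (n : nat) (i j : 'I_n) : {mpoly R[n * n]} :=
  'X_(mxvec_index i j).

Definition is_ncycle (n : nat) (s : 'S_n) : bool :=
  [forall x : 'I_n, #|porbit s x| == n].

Definition HC (R : ringType) (n : nat) : {mpoly R[n * n]} :=
  \sum_(s : 'S_n | is_ncycle s) \prod_(i < n) var_ij R i (s i).

Definition HC2 (R : ringType) (n : nat) : {mpoly R[n * n]} := HC R n ^+ 2.

Definition proj_le (K : ringType) (m M : nat) (f : {mpoly K[m]}) (g : {mpoly K[M]}) : Prop :=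
  exists a : M.-tuple {mpoly K[m]},
    (forall i : 'I_M, (exists j : 'I_m, tnth a i = 'X_j) \/ (exists c : K, tnth a i = c%:MP))
    /\ f = g \mPo a.

Notation Feps F := {fraction {poly F}}.
Definition eps (F : fieldType) : Feps F := tofrac 'X.
Definition embF (F : fieldType) (a : F) : Feps F := tofrac (a%:P).

Definition border_le (F : fieldType) (m M : nat) (f : {mpoly F[m]}) (g : {mpoly F[M]}) : Prop :=
  exists h : {mpoly {poly F}[m]},
    proj_le (map_mpoly (@embF F) f + eps F *: map_mpoly (@tofrac _) h)
            (map_mpoly (@embF F) g).

Definition poly_bounded (t : nat -> nat) : Prop :=
  exists c : nat, forall n : nat, (t n <= c * n ^ c + c)%N.

Definition border_le_p (F : fieldType) (vf vg : nat -> nat)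
    (f : forall n, {mpoly F[vf n]}) (g : forall n, {mpoly F[vg n]}) : Prop :=
  exists t : nat -> nat, poly_bounded t /\ forall n, border_le (f n) (g (t n)).

From HB Require Import structures.
From mathcomp Require Import all_boot all_order all_algebra all_fingroup.
From mathcomp Require Import mpoly.
From mathcomp Require Import zify.
Set Implicit Arguments. Unset Strict Implicit. Unset Printing Implicit Defensive.
Import GRing.Theory.
Local Open Scope ring_scope.

(* Already the member n = 1 fails: HC_1 = x is a single variable, and a variable
   is not a border projection of a square.  Suppose x + eps h = G^2 over F(eps).
   Sending all variables to x and clearing denominators gives
   d^2 (x + eps h) = R^2 in F[eps][x] with d <> 0.  At eps = 0 this reads
   d(0)^2 x = R(0)^2, which forces d(0) = 0 since squares have odd size; then
   eps divides d and R, and dividing by eps^2 gives a counterexample with a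
   smaller d. *)

HB.instance Definition _ (F : fieldType) :=
  GRing.RMorphism.copy (@embF F) ((@tofrac _) \o (@polyC F)).

Lemma HC1E (R : ringType) : HC R 1 = var_ij R ord0 ord0.
Proof.
rewrite /HC (big_pred1 1%g) ?big_ord1 ?perm1 // => s /=.
have -> : s = 1%g by apply/permP => i; rewrite !ord1.
rewrite eqxx; apply/forallP => x; rewrite eqn_leq; apply/andP; split.
  by apply: leq_trans (max_card _) _; rewrite card_ord.
by rewrite card_gt0; apply/set0Pn; exists x; exact: porbit_id.
Qed.

Lemma scale_X_neq_sqr (R : idomainType) (c : R) (p : {poly R}) :
  c != 0 -> c%:P * 'X != p ^+ 2.
Proof.
move=> c_neq0; apply/eqP => /(congr1 (fun p : {poly R} => size p)) /=.
rewrite mul_polyC size_scale // size_polyX expr2.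
have [->|p_neq0] := eqVneq p 0; first by rewrite mul0r size_poly0.
by rewrite size_mul //; move: (size p) => s; lia.
Qed.

Lemma frac_quotient (R : idomainType) (x : {fraction R}) :
  exists n d, d != 0 /\ x = tofrac n / tofrac d.
Proof.
elim/quotW: x => r; exists (\n_r), (\d_r); split; first exact: denom_ratioP.
have d_neq0 : tofrac (\d_r) != 0 :> {fraction R} by rewrite tofrac_eq0 denom_ratioP.
suff <- : (\pi_({fraction R})%qT r) * tofrac (\d_r) = tofrac (\n_r).
  by rewrite mulrK // unitfE.
change (FracField.mul (\pi_({fraction R})%qT r) (tofrac (\d_r)) = tofrac (\n_r)).
rewrite !piE; apply/eqmodP; rewrite /= FracField.equivfE /FracField.mulf.
by rewrite !numden_Ratio ?mulr1 ?oner_neq0 ?denom_ratioP // mulrC.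
Qed.

Lemma poly_frac_clear_denom (R : idomainType) (P : {poly {fraction R}}) :
  exists (d : R) (Q : {poly R}),
    d != 0 /\ map_poly (@tofrac R) Q = (tofrac d)%:P * P.
Proof.
elim/poly_ind: P => [|P c [d [Q [d_neq0 HQ]]]].
  by exists 1, 0; rewrite oner_neq0 rmorph0 mulr0.
have [n [e [e_neq0 ->]]] := frac_quotient c.
exists (d * e), (e%:P * Q * 'X + (d * n)%:P); split; first by rewrite mulf_neq0.
have e_unit : tofrac e \is a GRing.unit by rewrite unitfE tofrac_eq0.
rewrite rmorphD rmorphM rmorphM /= map_polyX !map_polyC /= HQ !rmorphM /= mulrDr.
congr (_ + _); first by rewrite mulrA [(tofrac e)%:P * _]mulrC -!mulrA.
by rewrite -!polyCM [tofrac n * _]mulrC mulrA mulrK.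
Qed.

Lemma factorY_of_map_horner0 (F : fieldType) (R : {poly {poly F}}) :
  map_poly (horner_eval 0) R = 0 -> exists R1, R = 'Y * R1.
Proof.
move=> R0_eq0; exists (\poly_(i < size R) (R`_i %/ 'X)).
apply/polyP => i; rewrite coefCM coef_poly.
case: ltnP => [_|/leq_sizeP R_eq0]; last by rewrite R_eq0 ?mulr0.
have : root R`_i 0.
  by rewrite /root -[_.[0]]/(horner_eval 0 R`_i) -coef_map R0_eq0 coef0.
by case/factor_theorem => r ->; rewrite subr0 mulpK ?polyX_eq0 // mulrC.
Qed.

(* The inner variable 'Y of {poly {poly F}} plays the role of eps. *)
Section XaddYh.
Variables (F : fieldType) (h : {poly {poly F}}).
Local Notation q := ('X + 'Y * h).
Local Notation at_eps0 := (map_poly (horner_eval (0 : F))).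

Lemma map_horner0_X_add_Yh : at_eps0 q = 'X.
Proof.
rewrite rmorphD rmorphM /= map_polyX map_polyC /= /horner_eval hornerX.
by rewrite polyC0 mul0r addr0.
Qed.

Lemma scaled_X_add_Yh_neq_sqr (d : {poly F}) (R : {poly {poly F}}) :
  d != 0 -> (d ^+ 2)%:P * q != R ^+ 2.
Proof.
have [k] := ubnP (size d); elim: k d R => // k IH d R /ltnSE d_small d_neq0.
apply/negP => /eqP E.
have E0 : (d.[0] ^+ 2)%:P * 'X = at_eps0 R ^+ 2.
  rewrite -[RHS]rmorphXn -E rmorphM /= map_horner0_X_add_Yh map_polyC /=.
  by rewrite [horner_eval _ _]rmorphXn.
have [d0_eq0|d0_neq0] := eqVneq d.[0] 0; last first.
  by move: E0; apply/eqP; rewrite scale_X_neq_sqr ?expf_neq0.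
have [d1 d1E] : exists d1, d = d1 * 'X.
  have /factor_theorem[d1 ->] : root d 0 by apply/eqP.
  by exists d1; rewrite subr0.
have d1_neq0 : d1 != 0.
  by apply: contraNneq d_neq0 => d1_eq0; rewrite d1E d1_eq0 mul0r.
have [R1 R1E] : exists R1, R = 'Y * R1.
  apply: factorY_of_map_horner0; apply/eqP.
  by rewrite -sqrf_eq0 -E0 d0_eq0 expr0n mul0r.
have /negP[] : (d1 ^+ 2)%:P * q != R1 ^+ 2.
  by apply: IH => //; apply: leq_trans d_small; rewrite d1E size_mulX.
apply/eqP/(@mulfI _ ('Y ^+ 2)); first by rewrite expf_neq0 ?polyC_eq0 ?polyX_eq0.
by rewrite mulrA -rmorphXn -polyCM -exprMn [_ * d1]mulrC -d1E E R1E exprMn rmorphXn.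
Qed.

Lemma X_add_Yh_neq_sqr_frac (P : {poly {fraction {poly F}}}) :
  map_poly (@tofrac _) q != P ^+ 2.
Proof.
have [d [Q [d_neq0 QE]]] := poly_frac_clear_denom P.
apply: contra (scaled_X_add_Yh_neq_sqr Q d_neq0) => /eqP E; apply/eqP.
apply: (@map_inj_poly _ _ (@tofrac _)) => [x y /eqP|//|].
  by rewrite tofrac_eq => /eqP.
by rewrite rmorphM /= map_polyC E !rmorphXn /= QE exprMn -rmorphXn /= rmorphXn.
Qed.

End XaddYh.

Local Notation collapse := (mmap (@polyC _) (fun=> 'X)).

Lemma collapse_map_mpoly (R S : comRingType) (f : {rmorphism R -> S}) k
    (p : {mpoly R[k]}) :
  collapse (map_mpoly f p) = map_poly f (collapse p).
Proof.
elim/mpolyind: p => [|c m p _ _ IH]; first by rewrite !raddf0.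
rewrite !raddfD /= IH map_mpolyZ map_mpolyX !mmapZ !mmapX rmorphM /= map_polyC.
congr (_ * _ + _); rewrite /mmap1 rmorph_prod; apply: eq_bigr => i _.
by rewrite rmorphXn /= map_polyX.
Qed.

Lemma var_not_border_le_sqr (F : fieldType) m M (j : 'I_m) (g : {mpoly F[M]}) :
  ~ border_le 'X_j (g ^+ 2).
Proof.
move=> [h [a [_ Ha]]].
pose G := map_mpoly (@embF F) g \mPo a.
have /(congr1 collapse) :
    map_mpoly (@embF F) 'X_j + eps F *: map_mpoly (@tofrac _) h = G ^+ 2.
  by rewrite Ha !rmorphXn.
rewrite rmorphD /= map_mpolyX mmapX mmap1U mmapZ collapse_map_mpoly rmorphXn /=.
move=> E; have := X_add_Yh_neq_sqr_frac (collapse h) (collapse G).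
by rewrite rmorphD rmorphM /= map_polyX map_polyC -E eqxx.
Qed.

Theorem lemma2 (F : fieldType) :
  ~ @border_le_p F (fun n => (n * n)%N) (fun n => (n * n)%N) (HC F) (HC2 F).
Proof.
move=> [t [_ /(_ 1%N)]]; rewrite HC1E.
exact: var_not_border_le_sqr.
Qed.
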